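(* Let $n\ge 13$ and let $T^*$ be a chemical tree on $n$ vertices with maximum degree $\Delta(T^* )=3$ and at least $3$ vertices of degree $3$. Let $\Omega(n)$ be the set of chemical trees $T$ on $n$ vertices having $3$ vertices of degree $3$, $n-8$ vertices of degree $2$ and $5$ vertices of degree $1$, with $m_{1,2}(T)=m_{2,3}(T)=5$, $m_{1,3}(T)=0$, $m_{3,3}(T)=2$ and $m_{2,2}(T)=n-13$. If $T^*\notin\Omega(n)$, then there exists $T\in\Omega(n)$ such that $SO(T)<SO(T^* )$ and $SO_{red}(T)<SO_{red}(T^* )$.
   Context: A chemical tree is a tree with maximum degree at most $4$. $d_G(u)$ is the degree of $u$ and $m_{i,j}(G)$ is the number of edges joining a vertex of degree $i$ to a vertex of degree $j$. $SO(G)=\sum_{uv\in E(G)}\sqrt{d_G(u)^2+d_G(v)^2}$ and $SO_{red}(G)=\sum_{uv\in E(G)}\sqrt{(d_G(u)-1)^2+(d_G(v)-1)^2}$. *)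

From HB Require Import structures.
From mathcomp Require Import all_boot all_order all_algebra.
From mathcomp Require Import reals.
Set Implicit Arguments. Unset Strict Implicit. Unset Printing Implicit Defensive.
Import Order.TTheory GRing.Theory Num.Theory.

Section Graphs.
Variable n : nat.
Implicit Types (e : rel 'I_n).

Definition simple_graph e : Prop := symmetric e /\ irreflexive e.

Definition deg e (v : 'I_n) : nat := #|[set u | e v u]|.

(* edges are listed once, as ordered pairs (u,v) with u < v *)
Definition is_edge e (p : 'I_n * 'I_n) : bool := (val p.1 < val p.2)%N && e p.1 p.2.

Definition num_edges e : nat := #|[set p | is_edge e p]|.

Definition is_tree e : Prop :=
  simple_graph e /\ (forall u v, connect e u v) /\ num_edges e = n.-1.

Definition chemical_tree e : Prop := is_tree e /\ forall v, (deg e v <= 4)%N.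

Definition max_deg e : nat := \max_(v : 'I_n) deg e v.

Definition num_deg e (k : nat) : nat := #|[set v | deg e v == k]|.

Definition medges e (i j : nat) : nat :=
  #|[set p | is_edge e p &&
       (((deg e p.1 == i) && (deg e p.2 == j)) ||
        ((deg e p.1 == j) && (deg e p.2 == i)))]|.

Local Open Scope ring_scope.

Definition SO (R : realType) e : R :=
  \sum_(p : 'I_n * 'I_n | is_edge e p)
     Num.sqrt ((deg e p.1)%:R ^+ 2 + (deg e p.2)%:R ^+ 2).

Definition SO_red (R : realType) e : R :=
  \sum_(p : 'I_n * 'I_n | is_edge e p)
     Num.sqrt (((deg e p.1)%:R - 1) ^+ 2 + ((deg e p.2)%:R - 1) ^+ 2).

Definition in_Omega e : Prop :=
  chemical_tree e /\
  num_deg e 3 = 3%N /\ num_deg e 2 = (n - 8)%N /\ num_deg e 1 = 5%N /\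
  medges e 1 2 = 5%N /\ medges e 2 3 = 5%N /\ medges e 1 3 = 0%N /\
  medges e 3 3 = 2%N /\ medges e 2 2 = (n - 13)%N.

End Graphs.

(* Once all degrees lie in {1, 2, 3} and no edge joins two leaves, SO and SO_red
   are weighted edge counts  sum c_ij m_ij.  The handshake identities, together
   with n_1 + n_2 + n_3 = n and m = n - 1, express m_12, m_22 and m_23 through
   k = n_3, m_13 and m_33, and the excess over any tree of Omega(n) becomes
     (k - 3) (c12 - 3 c22 + c23 + c33) + m13 (c13 + c22 - c12 - c23)
       + (k - 1 - m33) (2 c23 - c22 - c33).
   The degree-3 vertices induce a forest, so m33 <= k - 1.  For both weight
   systems the three brackets are positive, hence the excess is positive unless
   k = 3, m13 = 0 and m33 = 2, i.e. unless the tree lies in Omega(n); and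
   Omega(n) is nonempty for n >= 13, as an explicit tree shows. *)

From HB Require Import structures.
From mathcomp Require Import all_boot all_order all_algebra.
From mathcomp Require Import reals.
From mathcomp Require Import zify ring lra.
Import Order.TTheory GRing.Theory Num.Theory.

Set Implicit Arguments.
Unset Strict Implicit.
Unset Printing Implicit Defensive.

Section DegreeSums.
Variables (n : nat) (e : rel 'I_n).
Local Open Scope ring_scope.

Lemma handshake_sum (V : nmodType) (phi : nat -> V) :
  symmetric e -> irreflexive e ->
  \sum_(p : 'I_n * 'I_n | is_edge e p) (phi (deg e p.1) + phi (deg e p.2)) =
  \sum_(v : 'I_n) phi (deg e v) *+ deg e v.
Proof.
move=> e_sym e_irr.
have -> : \sum_(v : 'I_n) phi (deg e v) *+ deg e v =
           \sum_(v : 'I_n) \sum_(u | e v u) phi (deg e v).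
  apply: eq_bigr => v _; rewrite sumr_const /deg; congr (_ *+ _).
  by apply: eq_card => u; rewrite inE.
rewrite pair_big_dep /= [RHS](bigID (fun p : 'I_n * 'I_n => (val p.1 < val p.2)%N)) /=.
rewrite big_split /=; congr (_ + _).
  by apply: eq_bigl => p; rewrite /is_edge andbC.
rewrite (reindex_inj (h := fun p : 'I_n * 'I_n => (p.2, p.1))); last first.
  by move=> [a b] [c d] /= [-> ->].
apply: eq_bigl => [[a b]] /=; rewrite /is_edge /= e_sym.
have [e_ab|] := boolP (e a b); rewrite ?andbF ?andbT //=.
have a_neq_b : val a != val b by apply: contraTneq e_ab => /val_inj ->; rewrite e_irr.
by rewrite ltnNge leq_eqVlt (negbTE a_neq_b).
Qed.

Lemma medges_sum i j : medges e i j =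
  \sum_(p | is_edge e p)
     (((deg e p.1 == i) && (deg e p.2 == j)) || ((deg e p.1 == j) && (deg e p.2 == i)) : nat).
Proof.
rewrite /medges cardsE -sum1_card big_mkcondr /=.
by apply: eq_bigr => p _; case: ifP.
Qed.

Lemma num_deg_sum i : num_deg e i = \sum_(v : 'I_n) (deg e v == i : nat).
Proof.
rewrite /num_deg cardsE -sum1_card big_mkcond /=.
by apply: eq_bigr => v _; rewrite /in_mem /= -/(deg e v == i); case: eqP.
Qed.

Hypothesis deg_range : forall v, (1 <= deg e v <= 3)%N.

Lemma sum_edges_by_degrees (V : nmodType) (F : nat -> nat -> V) :
  (forall i j, F i j = F j i) ->
  \sum_(p : 'I_n * 'I_n | is_edge e p) F (deg e p.1) (deg e p.2) =
  F 1 1 *+ medges e 1 1 + F 1 2 *+ medges e 1 2 + F 1 3 *+ medges e 1 3 +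
  F 2 2 *+ medges e 2 2 + F 2 3 *+ medges e 2 3 + F 3 3 *+ medges e 3 3.
Proof.
move=> F_sym; rewrite !medges_sum -!sumrMnr -!big_split /=.
apply: eq_bigr => p _; move: (deg_range p.1) (deg_range p.2).
case: (deg e p.1) => [|[|[|[|a]]]] //= _; case: (deg e p.2) => [|[|[|[|b]]]] //= _;
  by rewrite ?mulr0n ?mulr1n ?add0r ?addr0.
Qed.

Lemma sum_vertices_by_degree (V : nmodType) (G : nat -> V) :
  \sum_(v : 'I_n) G (deg e v) =
  G 1 *+ num_deg e 1 + G 2 *+ num_deg e 2 + G 3 *+ num_deg e 3.
Proof.
rewrite !num_deg_sum -!sumrMnr -!big_split /=.
apply: eq_bigr => v _; move: (deg_range v).
by case: (deg e v) => [|[|[|[|a]]]] //= _; rewrite ?mulr0n ?mulr1n ?add0r ?addr0.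
Qed.

End DegreeSums.

Section Connected.
Variables (n : nat) (e : rel 'I_n).
Hypothesis e_conn : forall u v, connect e u v.

Lemma deg_gt0 v : 1 < n -> 0 < deg e v.
Proof.
move=> n_gt1.
have : 0 < #|[set~ v]| by rewrite cardsC1 card_ord; case: n n_gt1 => [|[|]].
case/card_gt0P => w; rewrite !inE => w_neq_v.
case/connectP: (e_conn v w) => [[|x p]] /=.
  by move=> _ w_eq; rewrite w_eq eqxx in w_neq_v.
by case/andP => e_vx _ _; apply/card_gt0P; exists x; rewrite inE.
Qed.

Lemma deg1_neighbor_unique x y z : deg e x = 1 -> e x y -> e x z -> z = y.
Proof.
move=> deg_x e_xy e_xz.
have /cards1P [w Nx] : #|[set u | e x u]| == 1 by rewrite -/(deg e x) deg_x.
have : y \in [set u | e x u] by rewrite inE.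
have : z \in [set u | e x u] by rewrite inE.
by rewrite Nx !inE => /eqP -> /eqP ->.
Qed.

(* Two adjacent leaves form a closed component, so they are the whole graph. *)
Lemma medges11_eq0 : symmetric e -> 2 < n -> medges e 1 1 = 0.
Proof.
move=> e_sym n_gt2; apply/eqP; rewrite cards_eq0; apply/eqP/setP => [[a b]].
rewrite !inE /is_edge /= orbb.
apply/negP => /andP [/andP [_ e_ab] /andP [/eqP deg_a /eqP deg_b]].
have e_ba : e b a by rewrite e_sym.
have C_out x y : e x y -> x \in [set a; b] -> y \in [set a; b].
  move=> e_xy; rewrite !inE => /orP [] /eqP x_eq; subst x.
    by rewrite (deg1_neighbor_unique deg_a e_ab e_xy) eqxx orbT.
  by rewrite (deg1_neighbor_unique deg_b e_ba e_xy) eqxx.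
have C_closed : closed e (mem [set a; b]).
  by move=> x y e_xy; apply/idP/idP; apply: C_out; rewrite // e_sym.
have : 0 < #|~: [set a; b]|.
  by rewrite cardsCs setCK card_ord cards2; case: (a != b) => /=; lia.
case/card_gt0P => w; rewrite inE => w_out.
by move: w_out; rewrite -(closed_connect C_closed (e_conn a w)) !inE eqxx.
Qed.

End Connected.

Section RootedTree.
Variables (n : nat) (e : rel 'I_n).
Hypotheses (e_sym : symmetric e) (e_irr : irreflexive e).
Hypothesis e_conn : forall u v, connect e u v.
Hypothesis e_edges : num_edges e = n.-1.
Variable r : 'I_n.

Fixpoint within_dist k v : bool :=
  if k is k'.+1 then within_dist k' v || [exists w, e v w && within_dist k' w]
  else v == r.

Lemma within_dist_path p v : path e v p -> last v p = r -> within_dist (size p) v.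
Proof.
elim: p v => [|w p IHp] v /=; first by move=> _ ->.
case/andP => e_vw w_p p_last; apply/orP; right; apply/existsP; exists w.
by rewrite e_vw IHp.
Qed.

Lemma exists_within_dist v : exists k, within_dist k v.
Proof.
have /connectP [p v_p p_last] := e_conn v r.
by exists (size p); apply: within_dist_path.
Qed.

Definition root_dist v := ex_minn (exists_within_dist v).

Lemma root_dist_step v : v != r -> exists w, e v w && (root_dist w < root_dist v).
Proof.
move=> v_neq_r; rewrite /root_dist; case: ex_minnP => k v_k k_min.
case: k v_k k_min => [|k] /=; first by rewrite (negbTE v_neq_r).
case/orP => [v_k k_min | /existsP [w /andP [e_vw w_k]] k_min].
  by have := k_min _ v_k; rewrite ltnn.
exists w; rewrite e_vw /=; case: ex_minnP => j _ j_min.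
by rewrite ltnS; apply: j_min.
Qed.

Definition parent v : 'I_n :=
  if [pick w | e v w && (root_dist w < root_dist v)] is Some w then w else v.

Lemma parentP v : v != r -> e v (parent v) && (root_dist (parent v) < root_dist v).
Proof.
move=> v_neq_r; rewrite /parent; case: pickP => [w //| no_w].
by have [w w_ok] := root_dist_step v_neq_r; move: (no_w w); rewrite w_ok.
Qed.

Definition parent_edge v : 'I_n * 'I_n :=
  if val v < val (parent v) then (v, parent v) else (parent v, v).

Definition edge_child (p : 'I_n * 'I_n) : 'I_n :=
  if root_dist p.1 < root_dist p.2 then p.2 else p.1.

Lemma parent_edgeK v : v != r -> edge_child (parent_edge v) = v.
Proof.
move=> /parentP /andP [_ dist_lt]; rewrite /parent_edge.
by case: ifP => _; rewrite /edge_child /= ?dist_lt // ltnNge (ltnW dist_lt).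
Qed.

Lemma is_edge_parent_edge v : v != r -> is_edge e (parent_edge v).
Proof.
move=> /parentP /andP [e_vp _]; rewrite /parent_edge /is_edge.
case: ifP => v_lt /=; first by rewrite v_lt e_vp.
rewrite e_sym e_vp andbT ltn_neqAle leqNgt v_lt andbT.
by apply: contraTneq e_vp => /val_inj ->; rewrite e_irr.
Qed.

Lemma edges_parent_edge : [set p | is_edge e p] = parent_edge @: [set~ r].
Proof.
apply/eqP; rewrite eq_sym eqEcard; apply/andP; split.
  apply/subsetP => p /imsetP [v]; rewrite !inE => v_neq_r ->.
  exact: is_edge_parent_edge.
rewrite card_in_imset; first by rewrite cardsC1 card_ord -e_edges.
move=> u v; rewrite !inE => u_neq_r v_neq_r uv_eq.
by rewrite -(parent_edgeK u_neq_r) uv_eq parent_edgeK.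
Qed.

(* Each edge inside S is sent injectively to its endpoint farther from r,
   which lies in S minus r. *)
Lemma induced_edges_lt (S : {set 'I_n}) : r \in S ->
  #|[set p | is_edge e p && (p.1 \in S) && (p.2 \in S)]| < #|S|.
Proof.
move=> r_in_S; set ES := [set p | _].
have ES_parent p : p \in ES -> exists2 v, v != r & p = parent_edge v.
  rewrite inE => /andP [/andP [p_edge _] _].
  have : p \in [set p | is_edge e p] by rewrite inE.
  by rewrite edges_parent_edge => /imsetP [v]; rewrite !inE => v_neq_r ->; exists v.
have child_inj : {in ES &, injective edge_child}.
  move=> p q /ES_parent [u u_neq_r ->] /ES_parent [v v_neq_r ->].
  by rewrite !parent_edgeK // => ->.
rewrite -(card_in_imset child_inj) (cardsD1 r S) r_in_S add1n ltnS.
apply/subset_leq_card/subsetP => x /imsetP [p p_in ->].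
have [v v_neq_r p_eq] := ES_parent p p_in.
move: p_in; rewrite inE p_eq parent_edgeK // !inE v_neq_r /=.
by rewrite /parent_edge; case: ifP => _ /= /andP [/andP [_ ?] ?].
Qed.

End RootedTree.

Lemma mulrn_nat (x k : nat) : (x *+ k)%R = x * k.
Proof. by rewrite -mulr_natr natn. Qed.

Section SubcubicTree.
Variables (n : nat) (e : rel 'I_n).
Hypotheses (n_gt2 : 2 < n) (e_tree : is_tree e) (e_deg3 : forall v, deg e v <= 3).

Lemma subcubic_deg_range v : 1 <= deg e v <= 3.
Proof.
have [_ [e_conn _]] := e_tree.
by rewrite e_deg3 andbT deg_gt0 // ltnW.
Qed.

Lemma subcubic_tree_counts :
  [/\ medges e 1 2 + medges e 1 3 = num_deg e 1,
      medges e 1 2 + 2 * medges e 2 2 + medges e 2 3 = 2 * num_deg e 2,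
      medges e 1 3 + medges e 2 3 + 2 * medges e 3 3 = 3 * num_deg e 3,
      medges e 1 2 + medges e 1 3 + medges e 2 2 + medges e 2 3 + medges e 3 3 = n.-1 &
      num_deg e 1 + num_deg e 2 + num_deg e 3 = n].
Proof.
have [[e_sym e_irr] [e_conn e_edges]] := e_tree.
have m11 := medges11_eq0 e_conn e_sym n_gt2.
have edge_sum := sum_edges_by_degrees subcubic_deg_range.
have vertex_sum := sum_vertices_by_degree subcubic_deg_range.
(* The handshake sum for phi = [degree is i] counts each degree-i vertex i times. *)
have per_degree i :
    ((1 == i) + (1 == i)) * medges e 1 1 + ((1 == i) + (2 == i)) * medges e 1 2 +
    ((1 == i) + (3 == i)) * medges e 1 3 + ((2 == i) + (2 == i)) * medges e 2 2 +
    ((2 == i) + (3 == i)) * medges e 2 3 + ((3 == i) + (3 == i)) * medges e 3 3 =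
    (1 == i) * 1 * num_deg e 1 + (2 == i) * 2 * num_deg e 2 + (3 == i) * 3 * num_deg e 3.
  have := handshake_sum (fun d => (d == i : nat)) e_sym e_irr.
  rewrite (edge_sum _ (fun a b => (a == i : nat) + (b == i))); last by move=> a b; rewrite addnC.
  by rewrite (vertex_sum _ (fun d => ((d == i : nat) *+ d)%R)) !mulrn_nat.
have edge_total : \sum_(p : 'I_n * 'I_n | is_edge e p) 1 = n.-1.
  by rewrite -e_edges /num_edges cardsE -sum1_card; apply: eq_bigr.
have vertex_total : \sum_(v : 'I_n) 1 = n by rewrite -[RHS]card_ord -sum1_card.
have := edge_sum _ (fun _ _ => 1) (fun _ _ => erefl); rewrite edge_total.
have := vertex_sum _ (fun _ => 1); rewrite vertex_total.
move: (per_degree 1) (per_degree 2) (per_degree 3).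
rewrite m11 !mulrn_nat /= => *; split; lia.
Qed.

Lemma medges33_lt_num_deg3 : 0 < num_deg e 3 -> medges e 3 3 < num_deg e 3.
Proof.
have [[e_sym e_irr] [e_conn e_edges]] := e_tree.
rewrite /num_deg => /card_gt0P [r r_deg3].
have := induced_edges_lt e_sym e_irr e_conn e_edges r_deg3.
congr (_ < _); apply: eq_card => p; rewrite !inE.
by rewrite orbb andbA.
Qed.

Lemma subcubic_in_Omega :
  num_deg e 3 = 3 -> medges e 1 3 = 0 -> medges e 3 3 = 2 -> in_Omega e.
Proof.
move=> k_eq m13_eq m33_eq; have [] := subcubic_tree_counts.
rewrite k_eq m13_eq m33_eq => c1 c2 c3 c4 c5.
split; first by split=> // v; exact: leq_trans (e_deg3 v) _.
by repeat split; lia.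
Qed.

End SubcubicTree.

Lemma card_ord_count n (P : pred nat) :
  #|[set v : 'I_n | P (val v)]| = count P (iota 0 n).
Proof.
rewrite -val_enum_ord count_map cardsE cardE /enum_mem size_filter.
by rewrite (@eq_filter _ _ predT) ?filter_predT.
Qed.

Lemma count_iota_prefix (P : pred nat) m n : m <= n ->
  (forall u, m <= u -> ~~ P u) -> count P (iota 0 n) = count P (iota 0 m).
Proof.
move=> le_mn P_tail; rewrite -(subnKC le_mn) iotaD count_cat.
suff -> : count P (iota (0 + m) (n - m)) = 0 by rewrite addn0.
apply/eqP; rewrite -leqn0 leqNgt -has_count; apply/hasPn => u.
by rewrite mem_iota => /andP [/P_tail].
Qed.

(* The witness: the path 2 - 5 - 8 of branching vertices, with pendant paths
   2 - 1 - 0, 2 - 3 - 4, 5 - 6 - 7, 8 - 9 - 10 and 8 - 11 - 12 - ... - (n-1). *)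
Definition omega_parent (v : nat) : nat := if v \in [:: 5; 8; 11] then v - 3 else v.-1.

Definition omega_adj (u v : nat) : bool :=
  ((0 < v) && (u == omega_parent v)) || ((0 < u) && (v == omega_parent u)).

Definition omega_tree n : rel 'I_n := fun u v => omega_adj u v.
Arguments omega_tree : clear implicits.

Definition omega_deg n (v : nat) : nat :=
  if v \in [:: 2; 5; 8] then 3 else if v \in [:: 0; 4; 7; 10] then 1
  else if (11 < v) && (v.+1 == n) then 1 else 2.

Lemma omega_parent_lt v : 0 < v -> omega_parent v < v.
Proof. by rewrite /omega_parent !inE; case: ifP => [/or3P [] /eqP ->|]; lia. Qed.

Lemma omega_parent_le v : omega_parent v <= v.
Proof. by rewrite /omega_parent; case: ifP; lia. Qed.

Lemma omega_parent_tail v : 12 <= v -> omega_parent v = v.-1.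
Proof. by move=> v_ge12; rewrite /omega_parent !inE; case: ifP => //; lia. Qed.

Lemma omega_adj_tail v : 12 <= v -> omega_adj v =1 [pred u | (u == v.+1) || (u == v.-1)].
Proof.
move=> v_ge12 u; rewrite /omega_adj /= (omega_parent_tail v_ge12).
have [u_ge12|u_lt12] := leqP 12 u; first by rewrite (omega_parent_tail u_ge12); lia.
by have := omega_parent_le u; lia.
Qed.

Lemma omega_deg3 n v : (omega_deg n v == 3) = [|| v == 2, v == 5 | v == 8].
Proof. by rewrite /omega_deg !inE; case: ifP => // _; case: ifP => // _; case: ifP. Qed.

Section OmegaTree.
Variable n : nat.
Hypothesis n_ge13 : 13 <= n.

Lemma omega_sym : symmetric (omega_tree n).
Proof. by move=> u v; rewrite /omega_tree /omega_adj orbC. Qed.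

Lemma omega_irr : irreflexive (omega_tree n).
Proof.
move=> u; rewrite /omega_tree /omega_adj orbb; apply/negP => /andP [u_gt0 /eqP u_eq].
by have := omega_parent_lt u_gt0; rewrite -u_eq ltnn.
Qed.

Lemma is_edge_omega (p : 'I_n * 'I_n) :
  is_edge (omega_tree n) p = (0 < val p.2) && (val p.1 == omega_parent p.2).
Proof.
case: p => [a b]; rewrite /is_edge /omega_tree /omega_adj /=.
have [/andP [b_gt0 /eqP ->]|_] := boolP ((0 < val b) && (val a == omega_parent b)).
  by rewrite omega_parent_lt.
apply/negP => /andP [ab_lt /andP [a_gt0 /eqP b_eq]].
by have := omega_parent_lt a_gt0; lia.
Qed.

Definition omega_parent_ord (v : 'I_n) : 'I_n :=
  Ordinal (leq_ltn_trans (omega_parent_le v) (ltn_ord v)).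

Definition omega_root : 'I_n := Ordinal (leq_trans (isT : 0 < 13) n_ge13).

Lemma omega_connect_root (v : 'I_n) : connect (omega_tree n) omega_root v.
Proof.
have [k] := ubnP (val v); elim: k v => // k IHk v v_lt.
have [v_eq0|v_gt0] := posnP (val v).
  by have -> : v = omega_root by apply: val_inj.
apply: (connect_trans (y := omega_parent_ord v)).
  by apply: IHk; apply: leq_trans (omega_parent_lt v_gt0) _; rewrite -ltnS.
by apply: connect1; rewrite /omega_tree /omega_adj /= v_gt0 eqxx.
Qed.

Lemma omega_connect u v : connect (omega_tree n) u v.
Proof.
apply: (connect_trans (y := omega_root)); last exact: omega_connect_root.
by rewrite (sym_connect_sym omega_sym) omega_connect_root.
Qed.

Lemma card_omega_edges (Q : pred ('I_n * 'I_n)) :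
  #|[set p | is_edge (omega_tree n) p && Q p]| =
  #|[set v : 'I_n | (0 < val v) && Q (omega_parent_ord v, v)]|.
Proof.
have -> : [set p | is_edge (omega_tree n) p && Q p] =
    (fun v => (omega_parent_ord v, v)) @: [set v : 'I_n | (0 < val v) && Q (omega_parent_ord v, v)].
  apply/setP => [[a b]]; rewrite inE is_edge_omega /=; apply/idP/imsetP.
    case/andP => /andP [b_gt0 /eqP a_eq] Q_ab.
    have a_par : omega_parent_ord b = a by apply: val_inj.
    by exists b; rewrite ?inE a_par ?b_gt0.
  by move=> [v]; rewrite inE => /andP [v_gt0 Q_v] [-> ->] /=; rewrite v_gt0 eqxx.
by rewrite card_in_imset // => x y _ _ [].
Qed.

Lemma omega_num_edges : num_edges (omega_tree n) = n.-1.
Proof.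
rewrite /num_edges.
have -> : [set p | is_edge (omega_tree n) p] = [set p | is_edge (omega_tree n) p && true].
  by apply/setP => p; rewrite !inE andbT.
rewrite card_omega_edges.
have -> : [set v : 'I_n | (0 < val v) && true] = [set v : 'I_n | 0 < val v].
  by apply/setP => v; rewrite !inE andbT.
rewrite card_ord_count -(prednK (leq_trans (isT : 0 < 13) n_ge13)) /= add0n.
rewrite -[RHS](size_iota 1 n.-1) -count_predT; apply: eq_in_count => u.
by rewrite mem_iota => /andP [].
Qed.

Lemma omega_is_tree : is_tree (omega_tree n).
Proof.
split; first by split; [exact: omega_sym | exact: omega_irr].
by split; [exact: omega_connect | exact: omega_num_edges].
Qed.

Lemma deg_omega_tail (v : 'I_n) : 12 <= v -> deg (omega_tree n) v = omega_deg n v.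
Proof.
move=> v_ge12; rewrite /deg card_ord_count (eq_count (omega_adj_tail v_ge12)).
have := count_predUI (pred1 v.+1) (pred1 v.-1) (iota 0 n).
rewrite (@eq_count _ (predI _ _) pred0) ?count_pred0 ?addn0 => [->|u]; last first.
  by apply/negP => /andP [/eqP -> /eqP]; lia.
rewrite !count_uniq_mem ?iota_uniq // !mem_iota /omega_deg !inE.
by have := ltn_ord v; repeat case: ifP => ?; lia.
Qed.

Lemma deg_omega_head (v : 'I_n) : v < 12 -> deg (omega_tree n) v = omega_deg n v.
Proof.
case: v => v v_lt_n /= v_lt12; rewrite /deg card_ord_count /=.
rewrite (count_iota_prefix n_ge13) => [|u u_ge13]; last first.
  rewrite /omega_adj (omega_parent_tail (ltnW u_ge13)).
  by apply/negP => /orP [] /andP [_ /eqP]; have := omega_parent_le v; lia.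
by do 12! [case: v v_lt_n v_lt12 => [|v] v_lt_n v_lt12; first by []].
Qed.

Lemma deg_omega (v : 'I_n) : deg (omega_tree n) v = omega_deg n v.
Proof. by case: (ltnP v 12) => [/deg_omega_head|/deg_omega_tail]. Qed.

Lemma omega_deg_le3 (v : 'I_n) : deg (omega_tree n) v <= 3.
Proof. by rewrite deg_omega /omega_deg; case: ifP => //; case: ifP => //; case: ifP. Qed.

Lemma omega_num_deg3 : num_deg (omega_tree n) 3 = 3.
Proof.
rewrite /num_deg.
have -> : [set v | deg (omega_tree n) v == 3] =
    [set v : 'I_n | [|| val v == 2, val v == 5 | val v == 8]].
  by apply/setP => v; rewrite !inE deg_omega omega_deg3.
apply: etrans (card_ord_count n (fun v => [|| v == 2, v == 5 | v == 8])) _.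
by rewrite (count_iota_prefix n_ge13) // => u; lia.
Qed.

Lemma omega_medges33 : medges (omega_tree n) 3 3 = 2.
Proof.
rewrite /medges.
have -> : [set p | is_edge (omega_tree n) p &&
      ((deg (omega_tree n) p.1 == 3) && (deg (omega_tree n) p.2 == 3)
    || (deg (omega_tree n) p.1 == 3) && (deg (omega_tree n) p.2 == 3))] =
    [set p | is_edge (omega_tree n) p &&
      ([|| val p.1 == 2, val p.1 == 5 | val p.1 == 8] &&
       [|| val p.2 == 2, val p.2 == 5 | val p.2 == 8])].
  by apply/setP => p; rewrite !inE !deg_omega !omega_deg3 orbb.
rewrite card_omega_edges.
apply: etrans (card_ord_count n (fun v => (0 < v) &&
  ([|| omega_parent v == 2, omega_parent v == 5 | omega_parent v == 8] &&
   [|| v == 2, v == 5 | v == 8]))) _.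
by rewrite (count_iota_prefix n_ge13) // => u; lia.
Qed.

Lemma omega_medges13 : medges (omega_tree n) 1 3 = 0.
Proof.
rewrite /medges.
have -> : [set p | is_edge (omega_tree n) p &&
      ((deg (omega_tree n) p.1 == 1) && (deg (omega_tree n) p.2 == 3)
    || (deg (omega_tree n) p.1 == 3) && (deg (omega_tree n) p.2 == 1))] =
    [set p | is_edge (omega_tree n) p &&
      ((omega_deg n p.1 == 1) && [|| val p.2 == 2, val p.2 == 5 | val p.2 == 8]
    || [|| val p.1 == 2, val p.1 == 5 | val p.1 == 8] && (omega_deg n p.2 == 1))].
  by apply/setP => p; rewrite !inE !deg_omega !omega_deg3.
rewrite card_omega_edges.
apply: etrans (card_ord_count n (fun v => (0 < v) &&
  ((omega_deg n (omega_parent v) == 1) && [|| v == 2, v == 5 | v == 8]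
  || [|| omega_parent v == 2, omega_parent v == 5 | omega_parent v == 8] &&
     (omega_deg n v == 1)))) _.
rewrite (count_iota_prefix n_ge13) // => u u_ge13.
by rewrite omega_parent_tail ?(ltnW u_ge13) //; lia.
Qed.

End OmegaTree.

Lemma omega_in_Omega n : 13 <= n -> in_Omega (omega_tree n).
Proof.
move=> n_ge13; apply: subcubic_in_Omega.
- exact: leq_trans n_ge13.
- exact: omega_is_tree.
- exact: omega_deg_le3.
- exact: omega_num_deg3.
- exact: omega_medges13.
- exact: omega_medges33.
Qed.

Local Open Scope ring_scope.

Definition bond_index (V : nmodType) (c : nat -> nat -> V) n (e : rel 'I_n) : V :=
  \sum_(p : 'I_n * 'I_n | is_edge e p) c (deg e p.1) (deg e p.2).

Lemma bond_index_by_medges (V : nmodType) (c : nat -> nat -> V) n (e : rel 'I_n) :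
  (forall i j, c i j = c j i) -> (2 < n)%N -> is_tree e -> (forall v, deg e v <= 3)%N ->
  bond_index c e = c 1 2 *+ medges e 1 2 + c 1 3 *+ medges e 1 3 +
    c 2 2 *+ medges e 2 2 + c 2 3 *+ medges e 2 3 + c 3 3 *+ medges e 3 3.
Proof.
move=> c_sym n_gt2 e_tree e_deg3; have [[e_sym _] [e_conn _]] := e_tree.
rewrite /bond_index (sum_edges_by_degrees (subcubic_deg_range n_gt2 e_tree e_deg3)) //.
by rewrite medges11_eq0 // mulr0n add0r.
Qed.

Lemma bond_sum_excess (R : realFieldType) (c : nat -> nat -> R)
    (k m12 m13 m22 m23 m33 N : nat) :
  (m12 + m13 = k + 2)%N -> (m13 + m23 + 2 * m33 = 3 * k)%N ->
  (m12 + m13 + m22 + m23 + m33 = N.-1)%N -> (13 <= N)%N ->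
  c 1 2 *+ m12 + c 1 3 *+ m13 + c 2 2 *+ m22 + c 2 3 *+ m23 + c 3 3 *+ m33 -
  (c 1 2 *+ 5 + c 2 2 *+ (N - 13) + c 2 3 *+ 5 + c 3 3 *+ 2) =
  (k%:R - 3) * (c 1 2 - 3 * c 2 2 + c 2 3 + c 3 3) +
  m13%:R * (c 1 3 + c 2 2 - c 1 2 - c 2 3) +
  (k%:R - 1 - m33%:R) * (2 * c 2 3 - c 2 2 - c 3 3).
Proof.
move=> e12 e23 e_edges N_ge13.
have e_total : (m12 + m13 + m22 + m23 + m33 + 1 = N)%N by lia.
have cast a b : a = b -> a%:R = b%:R :> R by move->.
move: (cast _ _ e12) (cast _ _ e23) (cast _ _ e_total); rewrite !natrD => F12 F23 Ftotal.
rewrite -!(mulr_natr (c _ _)) (natrB _ N_ge13).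
have -> : m22%:R = N%:R - 3 - 4 * k%:R + m13%:R + m33%:R :> R by lra.
have -> : m12%:R = k%:R + 2 - m13%:R :> R by lra.
have -> : m23%:R = 3 * k%:R - m13%:R - 2 * m33%:R :> R by lra.
by ring.
Qed.

Lemma bond_sum_gap (R : realFieldType) (c : nat -> nat -> R)
    (k m12 m13 m22 m23 m33 N : nat) :
  0 < c 1 2 - 3 * c 2 2 + c 2 3 + c 3 3 -> 0 < c 1 3 + c 2 2 - c 1 2 - c 2 3 ->
  c 2 2 + c 3 3 < 2 * c 2 3 ->
  (m12 + m13 = k + 2)%N -> (m13 + m23 + 2 * m33 = 3 * k)%N ->
  (m12 + m13 + m22 + m23 + m33 = N.-1)%N -> (13 <= N)%N ->
  (3 <= k)%N -> (m33 < k)%N -> ~ (k = 3 /\ m13 = 0 /\ m33 = 2)%N ->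
  c 1 2 *+ 5 + c 2 2 *+ (N - 13) + c 2 3 *+ 5 + c 3 3 *+ 2 <
  c 1 2 *+ m12 + c 1 3 *+ m13 + c 2 2 *+ m22 + c 2 3 *+ m23 + c 3 3 *+ m33.
Proof.
move=> gap_branch gap_13 gap_33 e12 e23 e_edges N_ge13 k_ge3 m33_lt not_omega.
rewrite -subr_gt0 (bond_sum_excess _ e12 e23 e_edges N_ge13).
set G1 := c 1 2 - 3 * c 2 2 + c 2 3 + c 3 3.
set G2 := c 1 3 + c 2 2 - c 1 2 - c 2 3.
set G3 := 2 * c 2 3 - c 2 2 - c 3 3.
have G3_gt0 : 0 < G3 by rewrite /G3; lra.
have k_ge3R : (3 : R) <= k%:R by rewrite (ler_nat R 3).
have m33_ltR : m33%:R + 1 <= k%:R :> R by rewrite natr1 ler_nat.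
have t1 : 0 <= (k%:R - 3) * G1 by apply: mulr_ge0; [lra | exact: ltW].
have t2 : 0 <= m13%:R * G2 by apply: mulr_ge0 => //; exact: ltW.
have t3 : 0 <= (k%:R - 1 - m33%:R) * G3 by apply: mulr_ge0; [lra | exact: ltW].
have [k_gt3|m13_gt0|m33_small] : [\/ (3 < k)%N, (0 < m13)%N | (m33.+2 <= k)%N].
  have [/or3P|] := boolP [|| 3 < k, 0 < m13 | m33.+2 <= k]%N; first by [].
  by move=> /norP [] /negP ? /norP [] /negP ? /negP ?; lia.
- have : 0 < (k%:R - 3) * G1.
    by apply: mulr_gt0 => //; rewrite subr_gt0 (ltr_nat R 3).
  lra.
- have : 0 < m13%:R * G2 by apply: mulr_gt0; rewrite ?ltr0n.
  lra.
- have : 0 < (k%:R - 1 - m33%:R) * G3.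
    apply: mulr_gt0 => //.
    have : m33%:R + 2 <= k%:R :> R by rewrite -natrD addn2 ler_nat.
    lra.
  lra.
Qed.

Lemma bond_index_omega_lt (R : realFieldType) (c : nat -> nat -> R) n (e : rel 'I_n) :
  (forall i j, c i j = c j i) ->
  0 < c 1 2 - 3 * c 2 2 + c 2 3 + c 3 3 -> 0 < c 1 3 + c 2 2 - c 1 2 - c 2 3 ->
  c 2 2 + c 3 3 < 2 * c 2 3 ->
  (13 <= n)%N -> is_tree e -> (forall v, deg e v <= 3)%N -> (3 <= num_deg e 3)%N ->
  ~ in_Omega e -> bond_index c (omega_tree n) < bond_index c e.
Proof.
move=> c_sym gap_branch gap_13 gap_33 n_ge13 e_tree e_deg3 k_ge3 e_notin.
have n_gt2 : (2 < n)%N by exact: leq_trans n_ge13.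
have [_ [_ [_ [_ [o12 [o23 [o13 [o33 o22]]]]]]]] := omega_in_Omega n_ge13.
rewrite (bond_index_by_medges c_sym n_gt2 e_tree e_deg3).
rewrite (bond_index_by_medges c_sym n_gt2 (omega_is_tree n_ge13) (omega_deg_le3 n_ge13)).
rewrite o12 o23 o13 o33 o22 mulr0n addr0.
have [c1 c2 c3 c4 c5] := subcubic_tree_counts n_gt2 e_tree e_deg3.
have m33_lt := medges33_lt_num_deg3 e_tree (leq_trans (isT : 0 < 3)%N k_ge3).
apply: (bond_sum_gap (k := num_deg e 3)) => //; try lia.
by move=> [k_eq [m13_eq m33_eq]]; apply/e_notin/subcubic_in_Omega.
Qed.

Definition so_weight (R : rcfType) (i j : nat) : R :=
  Num.sqrt (i%:R ^+ 2 + j%:R ^+ 2).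

Definition so_red_weight (R : rcfType) (i j : nat) : R :=
  Num.sqrt ((i%:R - 1) ^+ 2 + (j%:R - 1) ^+ 2).

Lemma SO_bond_index (R : realType) n (e : rel 'I_n) : SO R e = bond_index (so_weight R) e.
Proof. by []. Qed.

Lemma SO_red_bond_index (R : realType) n (e : rel 'I_n) :
  SO_red R e = bond_index (so_red_weight R) e.
Proof. by []. Qed.

Lemma so_weightC (R : rcfType) i j : so_weight R i j = so_weight R j i.
Proof. by rewrite /so_weight addrC. Qed.

Lemma so_red_weightC (R : rcfType) i j : so_red_weight R i j = so_red_weight R j i.
Proof. by rewrite /so_red_weight addrC. Qed.

Lemma sqrtr_bounds (R : rcfType) (x a b : R) :
  0 <= a -> 0 <= b -> a ^+ 2 <= x -> x <= b ^+ 2 -> a <= Num.sqrt x <= b.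
Proof.
move=> a_ge0 b_ge0 ax xb.
have := sqrtr_ge0 x; have := sqr_sqrtr (le_trans (sqr_ge0 a) ax).
by set s := Num.sqrt x => s_sq s_ge0; apply/andP; split; nra.
Qed.

Lemma so_weight_gaps (R : rcfType) :
  [/\ 0 < so_weight R 1 2 - 3 * so_weight R 2 2 + so_weight R 2 3 + so_weight R 3 3,
      0 < so_weight R 1 3 + so_weight R 2 2 - so_weight R 1 2 - so_weight R 2 3 &
      so_weight R 2 2 + so_weight R 3 3 < 2 * so_weight R 2 3].
Proof.
have : [/\ 2236 / 1000 <= so_weight R 1 2 <= 2237 / 1000,
    3162 / 1000 <= so_weight R 1 3 <= 3163 / 1000,
    2828 / 1000 <= so_weight R 2 2 <= 2829 / 1000,
    3605 / 1000 <= so_weight R 2 3 <= 3606 / 1000 &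
    4242 / 1000 <= so_weight R 3 3 <= 4243 / 1000].
  by split; apply: sqrtr_bounds; lra.
move: (so_weight R 1 2) (so_weight R 1 3) (so_weight R 2 2)
  (so_weight R 2 3) (so_weight R 3 3).
move=> w12 w13 w22 w23 w33.
case=> /andP [l12 u12] /andP [l13 u13] /andP [l22 u22] /andP [l23 u23] /andP [l33 u33].
by split; [clear -l12 u22 l23 l33 | clear -u12 l13 l22 u23 | clear -u22 l23 u33]; lra.
Qed.

Lemma so_red_weight_gaps (R : rcfType) :
  [/\ 0 < so_red_weight R 1 2 - 3 * so_red_weight R 2 2 + so_red_weight R 2 3 +
      so_red_weight R 3 3,
      0 < so_red_weight R 1 3 + so_red_weight R 2 2 - so_red_weight R 1 2 -
      so_red_weight R 2 3 &
      so_red_weight R 2 2 + so_red_weight R 3 3 < 2 * so_red_weight R 2 3].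
Proof.
have : [/\ 1 <= so_red_weight R 1 2 <= 1,
    2 <= so_red_weight R 1 3 <= 2,
    1414 / 1000 <= so_red_weight R 2 2 <= 1415 / 1000,
    2236 / 1000 <= so_red_weight R 2 3 <= 2237 / 1000 &
    2828 / 1000 <= so_red_weight R 3 3 <= 2829 / 1000].
  by split; apply: sqrtr_bounds; lra.
move: (so_red_weight R 1 2) (so_red_weight R 1 3) (so_red_weight R 2 2)
  (so_red_weight R 2 3) (so_red_weight R 3 3).
move=> w12 w13 w22 w23 w33.
case=> /andP [l12 u12] /andP [l13 u13] /andP [l22 u22] /andP [l23 u23] /andP [l33 u33].
by split; [clear -l12 u22 l23 l33 | clear -u12 l13 l22 u23 | clear -u22 l23 u33]; lra.
Qed.

Theorem theorem3p2 (R : realType) (n : nat) (Tstar : rel 'I_n) :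
  (13 <= n)%N ->
  chemical_tree Tstar ->
  max_deg Tstar = 3%N ->
  (3 <= num_deg Tstar 3)%N ->
  ~ in_Omega Tstar ->
  exists T : rel 'I_n,
    in_Omega T /\ SO R T < SO R Tstar /\ SO_red R T < SO_red R Tstar.
Proof.
move=> n_ge13 [Tstar_tree _] Tstar_max k_ge3 Tstar_notin.
have Tstar_deg3 v : (deg Tstar v <= 3)%N.
  by rewrite -Tstar_max; exact: (leq_bigmax (F := deg Tstar)).
have [so_branch so_13 so_33] := so_weight_gaps R.
have [red_branch red_13 red_33] := so_red_weight_gaps R.
exists (omega_tree n); split; first exact: omega_in_Omega.
rewrite !SO_bond_index !SO_red_bond_index.
by split; apply: bond_index_omega_lt => //; [exact: so_weightC | exact: so_red_weightC].
Qed.
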